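(* Let $\phi:\mathfrak V\to\mathfrak W$ be a $*$-linear map of super operator spaces, and let $\mathcal T\subseteq\mathfrak V$ be a closed subspace with $\mathcal T+\mathcal T^*=\mathfrak V$. Suppose there exist isometric $*$-representations of $\mathfrak V$ and $\mathfrak W$ on $\mathbb Z_2$-graded Hilbert spaces such that the restriction of $\phi$ to $\mathcal T$ is really strongly contractive. Then $\phi$ is strongly contractive (and hence hermitian contractive).
   Context: A $\mathbb Z_2$-graded Hilbert space $\widehat{\mathcal H}$ carries a grading operator $\epsilon$ (a selfadjoint unitary); the superinvolution on $\mathcal B(\widehat{\mathcal H})$ is $x^*=\epsilon\,x^\dagger\,\epsilon$, $x^\dagger$ the ordinary adjoint. A super operator space is an operator space $\mathfrak V$ with an antilinear involution $*$ such that $[x_{ij}]\mapsto[x_{ji}^*]$ is isometric on each $M_n(\mathfrak V)$. An isometric $*$-representation of $\mathfrak V$ is an isometric linear map $\rho:\mathfrak V\to\mathcal B(\widehat{\mathcal H})$ with $\rho(v^* )=\rho(v)^*$ (superinvolution). With respect to such representations, the strong norm of $x$ is $\Vert x\Vert^s=\sup\{|\langle x\xi,\epsilon\xi\rangle| : \xi\in\widehat{\mathcal H},\ \Vert\xi\Vert\le1\}$ (with $x$ identified with its image). A linear map $\phi$ is strongly contractive if $\Vert\phi(x)\Vert^s\le\Vert x\Vert^s$ for all $x$. The restriction of $\phi$ to $\mathcal T$ is really strongly contractive if for every unit vector $\eta$ in the representation space of $\mathfrak W$ and every $x\in\mathcal T$ there is a unit vector $\xi$ in the representation space of $\mathfrak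 V$ such that, with $a=\langle x\xi,\epsilon\xi\rangle$ and $b=\langle\phi(x)\eta,\epsilon\eta\rangle$, one has $|a|\ge|b|$ and $|\mathrm{Re}(a)|\ge|\mathrm{Re}(b)|$. The map $\phi$ is hermitian contractive if $\Vert\phi(x)\Vert\le\Vert x\Vert$ for every $x\in\mathfrak V$ with $x=x^*$. *)

From HB Require Import structures.
From mathcomp Require Import all_boot all_order all_algebra.
From mathcomp Require Import complex.
From mathcomp Require Import boolp classical_sets reals.
Set Implicit Arguments. Unset Strict Implicit. Unset Printing Implicit Defensive.
Import Order.TTheory GRing.Theory Num.Theory.
Local Open Scope ring_scope.
Local Open Scope classical_set_scope.

Definition cre (R : realType) (z : R[i]) : R := let: Complex a _ := z in a.
Definition cim (R : realType) (z : R[i]) : R := let: Complex _ b := z in b.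

Definition cmod (R : realType) (z : R[i]) : R :=
  Num.sqrt (cre z ^+ 2 + cim z ^+ 2).

Definition inner_product (R : realType) (H : lmodType R[i])
    (ip : H -> H -> R[i]) : Prop :=
  [/\ (forall (a : R[i]) (x y z : H), ip (a *: x + y) z = a * ip x z + ip y z),
      (forall x y : H, ip y x = conjc (ip x y)),
      (forall x : H, 0 <= ip x x) &
      (forall x : H, ip x x = 0 -> x = 0)].

Definition hnorm (R : realType) (H : lmodType R[i]) (ip : H -> H -> R[i])
    (x : H) : R := Num.sqrt (cre (ip x x)).

Definition complete_ip (R : realType) (H : lmodType R[i])
    (ip : H -> H -> R[i]) : Prop :=
  forall u : nat -> H,
    (forall e : R, 0 < e -> exists N : nat, forall m n : nat,
        (N <= m)%N -> (N <= n)%N -> hnorm ip (u m - u n) < e) ->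
    exists l : H, forall e : R, 0 < e -> exists N : nat, forall n : nat,
        (N <= n)%N -> hnorm ip (u n - l) < e.

(* (ip, eps) is a Z2-graded Hilbert space: ip is a complete inner product
   and eps is a selfadjoint unitary (grading operator). *)
Definition graded_hilbert (R : realType) (H : lmodType R[i])
    (ip : H -> H -> R[i]) (eps : H -> H) : Prop :=
  [/\ inner_product ip, complete_ip ip,
      (forall (a : R[i]) (x y : H), eps (a *: x + y) = a *: eps x + eps y),
      (forall x : H, eps (eps x) = x) &
      (forall x y : H, ip (eps x) y = ip x (eps y))].

Definition bounded_op (R : realType) (H : lmodType R[i])
    (ip : H -> H -> R[i]) (x : H -> H) : Prop :=
  (forall (a : R[i]) (u v : H), x (a *: u + v) = a *: x u + x v) /\
  exists c : R, forall u : H, hnorm ip (x u) <= c * hnorm ip u.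

Definition is_adjoint (R : realType) (H : lmodType R[i])
    (ip : H -> H -> R[i]) (x xd : H -> H) : Prop :=
  forall u v : H, ip (xd u) v = ip u (x v).

Definition opnorm (R : realType) (H : lmodType R[i])
    (ip : H -> H -> R[i]) (x : H -> H) : R :=
  sup [set hnorm ip (x u) | u in [set u : H | hnorm ip u <= 1]].

Definition snorm (R : realType) (H : lmodType R[i])
    (ip : H -> H -> R[i]) (eps : H -> H) (x : H -> H) : R :=
  sup [set cmod (ip (x u) (eps u)) | u in [set u : H | hnorm ip u <= 1]].

Definition cvnorm (R : realType) (n : nat) (v : 'cV[R[i]]_n) : R :=
  Num.sqrt (\sum_(i < n) cmod (v i ord0) ^+ 2).

Definition smxnorm (R : realType) (n m : nat) (a : 'M[R[i]]_(n, m)) : R :=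
  sup [set cvnorm (a *m v) | v in [set v : 'cV[R[i]]_m | cvnorm v <= 1]].

Definition lsmx (R : realType) (V : lmodType R[i]) (n m p : nat)
    (a : 'M[R[i]]_(n, m)) (X : 'M[V]_(m, p)) : 'M[V]_(n, p) :=
  \matrix_(i, j) \sum_(k < m) a i k *: X k j.

Definition rsmx (R : realType) (V : lmodType R[i]) (n m p : nat)
    (X : 'M[V]_(n, m)) (b : 'M[R[i]]_(m, p)) : 'M[V]_(n, p) :=
  \matrix_(i, j) \sum_(k < m) b k j *: X i k.

(* mn is a family of norms on the M_n(V) satisfying Ruan's axioms *)
Definition operator_space (R : realType) (V : lmodType R[i])
    (mn : forall n, 'M[V]_n -> R) : Prop :=
  [/\ (forall n (X : 'M[V]_n), mn n X = 0 -> X = 0),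
      (forall n (X Y : 'M[V]_n), mn n (X + Y) <= mn n X + mn n Y),
      (forall n (a : R[i]) (X : 'M[V]_n),
          mn n (\matrix_(i, j) (a *: X i j)) = cmod a * mn n X),
      (forall n m (X : 'M[V]_n) (Y : 'M[V]_m),
          mn (n + m)%N (block_mx X 0 0 Y) = Num.max (mn n X) (mn m Y)) &
      (forall n m (a : 'M[R[i]]_(n, m)) (X : 'M[V]_m) (b : 'M[R[i]]_(m, n)),
          mn n (rsmx (lsmx a X) b) <= smxnorm a * mn m X * smxnorm b)].

Definition vnorm (R : realType) (V : lmodType R[i])
    (mn : forall n, 'M[V]_n -> R) (v : V) : R :=
  mn 1%N (const_mx v).

Definition super_operator_space (R : realType) (V : lmodType R[i])
    (mn : forall n, 'M[V]_n -> R) (star : V -> V) : Prop :=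
  [/\ operator_space mn,
      (forall (a : R[i]) (x y : V), star (a *: x + y) = conjc a *: star x + star y),
      (forall x : V, star (star x) = x) &
      (forall n (X : 'M[V]_n), mn n (\matrix_(i, j) star (X j i)) = mn n X)].

(* rho : V -> B(H) is linear, isometric, and rho(v^* ) = rho(v)^*, where
   x^* = eps x^dagger eps is the superinvolution of B(H). *)
Definition iso_star_rep (R : realType) (V : lmodType R[i])
    (mn : forall n, 'M[V]_n -> R) (star : V -> V)
    (H : lmodType R[i]) (ip : H -> H -> R[i]) (eps : H -> H)
    (rho : V -> H -> H) : Prop :=
  [/\ (forall v : V, bounded_op ip (rho v)),
      (forall (a : R[i]) (v w : V) (u : H),
          rho (a *: v + w) u = a *: rho v u + rho w u),
      (forall v : V, opnorm ip (rho v) = vnorm mn v) &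
      (forall v : V, exists xd : H -> H,
          is_adjoint ip (rho v) xd /\
          forall u : H, rho (star v) u = eps (xd (eps u)))].

Definition star_linear (R : realType) (V W : lmodType R[i])
    (starV : V -> V) (starW : W -> W) (phi : V -> W) : Prop :=
  (forall (a : R[i]) (x y : V), phi (a *: x + y) = a *: phi x + phi y) /\
  (forall x : V, phi (starV x) = starW (phi x)).

Definition closed_subspace (R : realType) (V : lmodType R[i])
    (mn : forall n, 'M[V]_n -> R) (T : set V) : Prop :=
  [/\ T 0,
      (forall (a : R[i]) (x y : V), T x -> T y -> T (a *: x + y)) &
      (forall v : V, (forall e : R, 0 < e ->
          exists t : V, T t /\ vnorm mn (v - t) < e) -> T v)].

Definition really_strongly_contractive (R : realType) (V W : lmodType R[i])
    (H1 : lmodType R[i]) (ip1 : H1 -> H1 -> R[i]) (eps1 : H1 -> H1)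
    (rho1 : V -> H1 -> H1)
    (H2 : lmodType R[i]) (ip2 : H2 -> H2 -> R[i]) (eps2 : H2 -> H2)
    (rho2 : W -> H2 -> H2) (phi : V -> W) (T : set V) : Prop :=
  forall (eta : H2) (x : V), hnorm ip2 eta = 1 -> T x ->
    exists xi : H1, hnorm ip1 xi = 1 /\
      let a := ip1 (rho1 x xi) (eps1 xi) in
      let b := ip2 (rho2 (phi x) eta) (eps2 eta) in
      cmod b <= cmod a /\ `|cre b| <= `|cre a|.

Definition strongly_contractive (R : realType) (V W : lmodType R[i])
    (H1 : lmodType R[i]) (ip1 : H1 -> H1 -> R[i]) (eps1 : H1 -> H1)
    (rho1 : V -> H1 -> H1)
    (H2 : lmodType R[i]) (ip2 : H2 -> H2 -> R[i]) (eps2 : H2 -> H2)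
    (rho2 : W -> H2 -> H2) (phi : V -> W) : Prop :=
  forall x : V, snorm ip2 eps2 (rho2 (phi x)) <= snorm ip1 eps1 (rho1 x).

Definition hermitian_contractive (R : realType) (V W : lmodType R[i])
    (mnV : forall n, 'M[V]_n -> R) (starV : V -> V)
    (mnW : forall n, 'M[W]_n -> R) (phi : V -> W) : Prop :=
  forall x : V, starV x = x -> vnorm mnW (phi x) <= vnorm mnV x.

From HB Require Import structures.
From mathcomp Require Import all_boot all_order all_algebra.
From mathcomp Require Import complex.
From mathcomp Require Import boolp classical_sets reals.
From mathcomp Require Import ring lra.

(* Rotating x by a unimodular scalar e makes the value of the quadratic form
   <rho2 (phi x) eta, eps2 eta> real and nonnegative. Writing e x = t + s^* with
   t, s in T, and using that the quadratic form of a *-representation satisfies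
   q(s^* ) = conj q(s), this value is the real part of the quadratic form of
   rho2 (phi (t + s)) at eta; real strong contractivity on t + s bounds it by the
   real part of e <rho1 x xi, eps1 xi> at some unit xi, hence by ||x||^s.
   For x = x^*, eps rho(x) is selfadjoint in the Hilbert space sense, so the strong
   norm of rho(x), its numerical radius, is the operator norm ||x||: strong
   contractivity therefore implies hermitian contractivity. *)

Set Implicit Arguments. Unset Strict Implicit. Unset Printing Implicit Defensive.
Import Order.TTheory GRing.Theory Num.Theory.
Local Open Scope ring_scope.
Local Open Scope classical_set_scope.
Local Open Scope complex_scope.

Section ComplexModulus.
Variable R : realType.
Implicit Types (z w : R[i]) (r : R).

Lemma normc_cmod z : `|z| = (cmod z)%:C.
Proof. by case: z. Qed.

Lemma cmod_ge0 z : 0 <= cmod z. Proof. exact: sqrtr_ge0. Qed.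

Lemma cmodM z w : cmod (z * w) = cmod z * cmod w.
Proof. by have := normrM z w; rewrite !normc_cmod -rmorphM => /complexI. Qed.

Lemma cmod_conj z : cmod (conjc z) = cmod z.
Proof. by case: z => a b; rewrite /cmod /= sqrrN. Qed.

Lemma cmod_real r : cmod r%:C = `|r|.
Proof. by rewrite /cmod /= expr0n /= addr0 sqrtr_sqr. Qed.

Lemma cmod_sqr z : (cmod z ^+ 2)%:C = conjc z * z.
Proof. by have := normCKC z; rewrite normc_cmod -rmorphXn. Qed.

Lemma cre_le_cmod z : `|cre z| <= cmod z.
Proof. by case: z => a b; rewrite /cmod /= -(sqrtr_sqr a) ler_wsqrtr //; nra. Qed.

Lemma cmod_rotation z : exists2 e, cmod e = 1 & e * z = (cmod z)%:C.
Proof.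
have [->|z0] := eqVneq z 0.
  exists 1; last by rewrite mulr0 -normc_cmod normr0.
  by apply: complexI; rewrite -normc_cmod normr1.
exists (`|z| / z).
  by apply: complexI; rewrite -normc_cmod normrM normrV ?unitfE // normr_id divff ?normr_eq0.
by rewrite divfK // normc_cmod.
Qed.

Lemma creD z w : cre (z + w) = cre z + cre w. Proof. by case: z; case: w. Qed.
Lemma creN z : cre (- z) = - cre z. Proof. by case: z. Qed.
Lemma cre_conj z : cre (conjc z) = cre z. Proof. by case: z. Qed.
Lemma cre_realM r z : cre (r%:C * z) = r * cre z.
Proof. by case: z => a b /=; rewrite !mul0r subr0. Qed.

End ComplexModulus.

Section LinearMap.
Variables (R : realType) (U V : lmodType R[i]) (f : U -> V).
Hypothesis f_linear : linear f.

Lemma lin0 : f 0 = 0.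
Proof.
have := f_linear 1 0 0; rewrite !scale1r addr0 => f00.
by apply: (@addrI _ (f 0)); rewrite addr0 -f00.
Qed.

Lemma linD x y : f (x + y) = f x + f y.
Proof. by have := f_linear 1 x y; rewrite !scale1r. Qed.

Lemma linZ a x : f (a *: x) = a *: f x.
Proof. by rewrite -[a *: x]addr0 f_linear lin0 addr0. Qed.

Lemma linN x : f (- x) = - f x.
Proof. by rewrite -scaleN1r linZ scaleN1r. Qed.

Lemma linB x y : f (x - y) = f x - f y.
Proof. by rewrite linD linN. Qed.

End LinearMap.

Section InnerProduct.
Variables (R : realType) (H : lmodType R[i]) (ip : H -> H -> R[i]).
Hypothesis ip_inner : inner_product ip.
Implicit Types x y z : H.

Let ip_linear z : linear (ip^~ z : H -> R[i]^o).
Proof. by case: ip_inner => ipL _ _ _ a x y; apply: ipL. Qed.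

Lemma ipD x y z : ip (x + y) z = ip x z + ip y z. Proof. exact (linD (ip_linear z) x y). Qed.
Lemma ipZ a x z : ip (a *: x) z = a * ip x z. Proof. exact (linZ (ip_linear z) a x). Qed.
Lemma ip0 z : ip 0 z = 0. Proof. exact (lin0 (ip_linear z)). Qed.
Lemma ipN x z : ip (- x) z = - ip x z. Proof. exact (linN (ip_linear z) x). Qed.

Lemma ipC x y : ip y x = conjc (ip x y). Proof. by case: ip_inner. Qed.

Lemma ipDr x y z : ip z (x + y) = ip z x + ip z y.
Proof. by rewrite ipC ipD rmorphD /= -!ipC. Qed.
Lemma ipZr a x z : ip z (a *: x) = conjc a * ip z x.
Proof. by rewrite ipC ipZ rmorphM /= -ipC. Qed.
Lemma ipNr x z : ip z (- x) = - ip z x.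
Proof. by rewrite ipC ipN rmorphN /= -ipC. Qed.
Lemma ip0r z : ip z 0 = 0.
Proof. by rewrite ipC ip0 conjc0. Qed.

Definition sqnorm x := cre (ip x x).

Let ip_self_ge0 x : 0 <= ip x x. Proof. by case: ip_inner. Qed.

Lemma ip_self x : ip x x = (sqnorm x)%:C.
Proof.
by move: (ip_self_ge0 x); rewrite /sqnorm; case: (ip x x) => a b /andP[/eqP ->].
Qed.

Lemma sqnorm_ge0 x : 0 <= sqnorm x.
Proof. by rewrite -ler0c -ip_self. Qed.

Lemma sqnorm_eq0 x : sqnorm x = 0 -> x = 0.
Proof. by case: ip_inner => _ _ _ + s0; apply; rewrite ip_self s0. Qed.

Lemma hnorm_sqr x : hnorm ip x ^+ 2 = sqnorm x.
Proof. by rewrite sqr_sqrtr // sqnorm_ge0. Qed.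

Lemma hnorm_ge0 x : 0 <= hnorm ip x. Proof. exact: sqrtr_ge0. Qed.

Lemma hnorm_eq0 x : hnorm ip x = 0 -> x = 0.
Proof. by move=> h; apply: sqnorm_eq0; rewrite -hnorm_sqr h expr0n. Qed.

Lemma hnorm0 : hnorm ip 0 = 0.
Proof. by rewrite /hnorm ip0 sqrtr0. Qed.

Lemma sqnorm_le1 x : hnorm ip x <= 1 -> sqnorm x <= 1.
Proof.
by move=> x1; rewrite -hnorm_sqr -(expr1n R 2) ler_pXn2r ?nnegrE ?hnorm_ge0.
Qed.

Lemma sqnormZ a x : sqnorm (a *: x) = cmod a ^+ 2 * sqnorm x.
Proof. by rewrite /sqnorm ipZ ipZr mulrA (mulrC a) -cmod_sqr cre_realM. Qed.

Lemma hnormZ a x : hnorm ip (a *: x) = cmod a * hnorm ip x.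
Proof.
rewrite /hnorm -!/(sqnorm _) sqnormZ sqrtrM ?sqr_ge0 //.
by rewrite sqrtr_sqr ger0_norm ?cmod_ge0.
Qed.

Lemma sqnorm_parallelogram x y :
  sqnorm (x + y) + sqnorm (x - y) = 2 * sqnorm x + 2 * sqnorm y.
Proof. by rewrite /sqnorm !(ipD, ipN, ipDr, ipNr) !(creD, creN); ring. Qed.

Lemma cre_ip_le x y : cre (ip x y) <= hnorm ip x * hnorm ip y.
Proof.
have [x0|nx0] := eqVneq (hnorm ip x) 0; first by rewrite x0 mul0r (hnorm_eq0 x0) ip0.
have [y0|ny0] := eqVneq (hnorm ip y) 0; first by rewrite y0 mulr0 (hnorm_eq0 y0) ip0r.
set a := hnorm ip y; set b := hnorm ip x.
have a_gt0 : 0 < a by rewrite lt0r ny0 hnorm_ge0.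
have b_gt0 : 0 < b by rewrite lt0r nx0 hnorm_ge0.
(* expand 0 <= |a x - b y|^2 *)
have := sqnorm_ge0 (a%:C *: x - b%:C *: y).
rewrite /sqnorm !(ipD, ipN, ipZ, ipDr, ipNr, ipZr) !conjc_real !ip_self (ipC y x).
rewrite !(creD, creN, cre_realM, cre_conj) /= -!hnorm_sqr -/a -/b => h.
have : 0 <= (a * b) * (a * b - cre (ip y x)) by nra.
by rewrite pmulr_rge0 ?mulr_gt0 // subr_ge0 mulrC.
Qed.

Lemma cmod_ip_le x y : cmod (ip x y) <= hnorm ip x * hnorm ip y.
Proof.
have [e e1 exy] := cmod_rotation (ip x y).
by have := cre_ip_le (e *: x) y; rewrite ipZ exy hnormZ e1 mul1r.
Qed.

End InnerProduct.

Section GradedHilbert.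
Variables (R : realType) (H : lmodType R[i]) (ip : H -> H -> R[i]) (eps : H -> H).
Hypothesis hH : graded_hilbert ip eps.
Implicit Types x y : H.

Lemma graded_inner : inner_product ip. Proof. by case: hH. Qed.
Lemma eps_linear : linear eps. Proof. by case: hH. Qed.
Lemma epsK : involutive eps. Proof. by case: hH. Qed.
Lemma ip_epsl x y : ip (eps x) y = ip x (eps y). Proof. by case: hH. Qed.

Lemma ip_eps x y : ip (eps x) (eps y) = ip x y.
Proof. by rewrite ip_epsl epsK. Qed.

Lemma hnorm_eps x : hnorm ip (eps x) = hnorm ip x.
Proof. by rewrite /hnorm ip_eps. Qed.

End GradedHilbert.

Section SupImage.
Variables (R : realType) (T : Type) (D : set T) (f : T -> R).

Lemma le_sup_image x M : (forall u, D u -> f u <= M) -> D x ->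
  f x <= sup [set f u | u in D].
Proof.
move=> fM Dx; apply: ub_le_sup; last by exists x.
by exists M => _ [u Du <-]; apply: fM.
Qed.

Lemma sup_image_le x M : (forall u, D u -> f u <= M) -> D x ->
  sup [set f u | u in D] <= M.
Proof.
move=> fM Dx; apply: ge_sup; first by exists (f x), x.
by move=> _ [u Du <-]; apply: fM.
Qed.

End SupImage.

Definition qform (R : realType) (H : lmodType R[i]) (ip : H -> H -> R[i])
  (eps : H -> H) (X : H -> H) (u : H) : R[i] := ip (X u) (eps u).

Section QuadraticForm.
Variables (R : realType) (H : lmodType R[i]) (ip : H -> H -> R[i]) (eps : H -> H).
Hypothesis hH : graded_hilbert ip eps.
Variable X : H -> H.
Hypothesis hX : bounded_op ip X.
Implicit Types u : H.

Local Notation ball := [set u : H | hnorm ip u <= 1].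
Let ip_inner := graded_inner hH.

Lemma hnorm_le_opnorm u : hnorm ip u <= 1 -> hnorm ip (X u) <= opnorm ip X.
Proof.
case: hX => _ [c Xc] u1.
apply: (le_sup_image (f := fun v => hnorm ip (X v)) (D := ball) (M := `|c|)) => // v /= v1.
apply: le_trans (Xc v) _; apply: le_trans (ler_norm _) _.
by rewrite normrM (ger0_norm (hnorm_ge0 _ _)); apply: ler_piMr.
Qed.

Lemma cmod_qform_le_opnorm u :
  hnorm ip u <= 1 -> cmod (qform ip eps X u) <= opnorm ip X.
Proof.
move=> u1; apply: le_trans (cmod_ip_le ip_inner _ _) _.
rewrite (hnorm_eps hH); apply: le_trans _ (hnorm_le_opnorm u1).
exact: ler_piMr (hnorm_ge0 _ _) u1.
Qed.

Lemma cmod_qform_le_snorm u :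
  hnorm ip u <= 1 -> cmod (qform ip eps X u) <= snorm ip eps X.
Proof.
by move=> u1; apply: (le_sup_image (f := fun u => cmod (qform ip eps X u)) _ u1);
  apply: cmod_qform_le_opnorm.
Qed.

Lemma snorm_le_opnorm : snorm ip eps X <= opnorm ip X.
Proof.
apply: (sup_image_le (f := fun u => cmod (qform ip eps X u)) (x := 0)).
  exact: cmod_qform_le_opnorm.
by rewrite /= (hnorm0 ip_inner) ler01.
Qed.

Lemma snorm_ge0 : 0 <= snorm ip eps X.
Proof.
apply: le_trans (cmod_qform_le_snorm (u := 0) _); first exact: cmod_ge0.
by rewrite (hnorm0 ip_inner).
Qed.

Lemma cmod_qformZ a u :
  cmod (qform ip eps X (a *: u)) = cmod a ^+ 2 * cmod (qform ip eps X u).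
Proof.
have XL : linear X by case: hX.
rewrite /qform (linZ XL) (linZ (eps_linear hH)) (ipZ ip_inner) (ipZr ip_inner).
by rewrite !cmodM cmod_conj mulrA expr2.
Qed.

Lemma cmod_qform_le_sqnorm M :
    (forall u, hnorm ip u = 1 -> cmod (qform ip eps X u) <= M) ->
  forall u, cmod (qform ip eps X u) <= M * sqnorm ip u.
Proof.
move=> unitM u; have [u0|nu0] := eqVneq (hnorm ip u) 0.
  rewrite (hnorm_eq0 ip_inner u0) /qform (lin0 (proj1 hX)) /sqnorm !(ip0 ip_inner).
  by rewrite cmod_real !normr0 mulr0.
set n := hnorm ip u; have n_gt0 : 0 < n by rewrite lt0r nu0 hnorm_ge0.
have v1 : hnorm ip ((n^-1)%:C *: u) = 1.
  by rewrite (hnormZ ip_inner) cmod_real ger0_norm ?invr_ge0 ?ltW // mulVf ?gt_eqF.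
have n_inv_ge0 : 0 <= n^-1 by rewrite invr_ge0 ltW.
have := unitM _ v1; rewrite cmod_qformZ cmod_real (ger0_norm n_inv_ge0).
by rewrite -(hnorm_sqr ip_inner) -/n exprVn ler_pdivrMl ?exprn_gt0 // mulrC.
Qed.

Lemma snorm_le M : 0 <= M ->
  (forall u, hnorm ip u = 1 -> cmod (qform ip eps X u) <= M) -> snorm ip eps X <= M.
Proof.
move=> M0 unitM; apply: (sup_image_le (f := fun u => cmod (qform ip eps X u)) (x := 0)).
  move=> u /= u1; apply: le_trans (cmod_qform_le_sqnorm unitM u) _.
  exact: ler_piMr M0 (sqnorm_le1 ip_inner u1).
by rewrite /= (hnorm0 ip_inner) ler01.
Qed.

End QuadraticForm.

Lemma le_sqr_of_quadratic_bound (R : realFieldType) (N w : R) :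
  0 <= N -> 0 <= w -> (forall t, 2 * t * N <= w * (1 + t ^+ 2 * N)) -> N <= w ^+ 2.
Proof.
move=> N0 w0 Nw; have [w_eq0 | w_neq0] := eqVneq w 0.
  by have := Nw 1; rewrite w_eq0 mul0r expr0n /=; lra.
have w_gt0 : 0 < w by rewrite lt0r w_neq0.
have := ler_wpM2l (ltW w_gt0) (Nw w^-1); have := mulfV w_neq0; set s := w^-1 => ws.
have -> : w * (2 * s * N) = 2 * N * (w * s) by ring.
have -> : w * (w * (1 + s ^+ 2 * N)) = w ^+ 2 + N * (w * s) ^+ 2 by ring.
rewrite ws expr1n; lra.
Qed.

Section SuperSelfadjoint.
Variables (R : realType) (H : lmodType R[i]) (ip : H -> H -> R[i]) (eps : H -> H).
Hypothesis hH : graded_hilbert ip eps.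
Variables (X Xd : H -> H).
Hypotheses (hX : bounded_op ip X) (X_adj : is_adjoint ip X Xd).
Hypothesis X_super_sa : forall u, X u = eps (Xd (eps u)).
Implicit Types u v : H.

Let ip_inner := graded_inner hH.
Let X_linear : linear X. Proof. by case: hX. Qed.

(* X = X^* for the superinvolution: eps X is selfadjoint and has the quadratic form of X *)
Let A u := eps (X u).

Let A_sa u v : ip (A u) v = ip u (A v).
Proof.
by rewrite /A (ip_epsl hH) X_super_sa (ip_epsl hH) (epsK hH) X_adj -(ip_epsl hH).
Qed.

Let qformE u : qform ip eps X u = ip (A u) u.
Proof. by rewrite /qform /A (ip_epsl hH). Qed.

Let AD u v : A (u + v) = A u + A v.
Proof. by rewrite /A (linD X_linear) (linD (eps_linear hH)). Qed.

Let AB u v : A (u - v) = A u - A v.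
Proof. by rewrite /A (linB X_linear) (linB (eps_linear hH)). Qed.

Lemma re_polarization u v :
  cre (ip (A (u + v)) (u + v)) - cre (ip (A (u - v)) (u - v)) = 4 * cre (ip (A u) v).
Proof.
rewrite AD AB !(ipD ip_inner, ipN ip_inner, ipDr ip_inner, ipNr ip_inner).
by rewrite (A_sa v u) (ipC ip_inner (A u) v) !(creD, creN, cre_conj); ring.
Qed.

Lemma re_ip_le_snorm u v :
  2 * cre (ip (A u) v) <= snorm ip eps X * (sqnorm ip u + sqnorm ip v).
Proof.
have qA x : cmod (ip (A x) x) <= snorm ip eps X * sqnorm ip x.
  rewrite -qformE; apply: (cmod_qform_le_sqnorm hH hX) => y y1.
  by apply: (cmod_qform_le_snorm hH hX); rewrite y1.
have := re_polarization u v; have := sqnorm_parallelogram ip_inner u v.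
move: (cre_le_cmod (ip (A (u + v)) (u + v))) (cre_le_cmod (ip (A (u - v)) (u - v))).
rewrite !ler_norml => /andP[_ ?] /andP[? _].
have := qA (u + v); have := qA (u - v); nra.
Qed.

Lemma opnorm_le_snorm : opnorm ip X <= snorm ip eps X.
Proof.
set w := snorm ip eps X; have w0 : 0 <= w := snorm_ge0 hH hX.
apply: (sup_image_le (f := fun u => hnorm ip (X u)) (x := 0)); last first.
  by rewrite /= (hnorm0 ip_inner) ler01.
move=> u /= u1; set N := sqnorm ip (A u).
have N_le : N <= w ^+ 2.
  apply: (le_sqr_of_quadratic_bound (sqnorm_ge0 ip_inner _) w0) => t.
  have := re_ip_le_snorm u (t%:C *: A u).
  rewrite (ipZr ip_inner) conjc_real (ip_self ip_inner) -/N (sqnormZ ip_inner) cmod_real.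
  rewrite real_normK ?num_real // cre_realM /=.
  rewrite -/w -/N mulrA => /le_trans; apply; apply: (ler_wpM2l w0); rewrite lerD2r.
  exact (sqnorm_le1 ip_inner u1).
rewrite -(hnorm_eps hH) -/(A u) -(ger0_norm w0) -sqrtr_sqr; exact: ler_wsqrtr.
Qed.

End SuperSelfadjoint.

Section StarRepresentation.
Variables (R : realType) (V : lmodType R[i]) (mn : forall n, 'M[V]_n -> R) (star : V -> V).
Variables (H : lmodType R[i]) (ip : H -> H -> R[i]) (eps : H -> H) (rho : V -> H -> H).
Hypotheses (hH : graded_hilbert ip eps) (hrho : iso_star_rep mn star ip eps rho).
Implicit Types (v w : V) (u : H).

Let ip_inner := graded_inner hH.

Lemma rep_bounded v : bounded_op ip (rho v). Proof. by case: hrho. Qed.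

Let rep_linear u : linear (rho^~ u).
Proof. by case: hrho => _ rhoL _ _ a v w; apply: rhoL. Qed.

Lemma qform_repD v w u :
  qform ip eps (rho (v + w)) u = qform ip eps (rho v) u + qform ip eps (rho w) u.
Proof. by rewrite /qform (linD (rep_linear u)) (ipD ip_inner). Qed.

Lemma qform_repZ a v u : qform ip eps (rho (a *: v)) u = a * qform ip eps (rho v) u.
Proof. by rewrite /qform (linZ (rep_linear u)) (ipZ ip_inner). Qed.

Lemma qform_rep_star v u :
  qform ip eps (rho (star v)) u = conjc (qform ip eps (rho v) u).
Proof.
case: hrho => _ _ _ /(_ v) [xd [xd_adj rho_star]].
by rewrite /qform rho_star (ip_eps hH) xd_adj (ipC ip_inner).
Qed.

Lemma cre_qform_rep_star v w u :
  cre (qform ip eps (rho (v + star w)) u) = cre (qform ip eps (rho (v + w)) u).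
Proof. by rewrite !qform_repD qform_rep_star !creD cre_conj. Qed.

End StarRepresentation.

Section RealStrongContraction.
Variables (R : realType) (V W : lmodType R[i]).
Variables (mnV : forall n, 'M[V]_n -> R) (starV : V -> V).
Variables (mnW : forall n, 'M[W]_n -> R) (starW : W -> W).
Variables (phi : V -> W) (T : set V).
Hypothesis hphi : star_linear starV starW phi.
Hypothesis T_add : forall t s, T t -> T s -> T (t + s).
Hypothesis hTT : forall v : V, exists t s : V, [/\ T t, T s & v = t + starV s].
Variables (H1 : lmodType R[i]) (ip1 : H1 -> H1 -> R[i]) (eps1 : H1 -> H1).
Variables (rho1 : V -> H1 -> H1).
Variables (H2 : lmodType R[i]) (ip2 : H2 -> H2 -> R[i]) (eps2 : H2 -> H2).
Variables (rho2 : W -> H2 -> H2).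
Hypotheses (hH1 : graded_hilbert ip1 eps1) (hrho1 : iso_star_rep mnV starV ip1 eps1 rho1).
Hypotheses (hH2 : graded_hilbert ip2 eps2) (hrho2 : iso_star_rep mnW starW ip2 eps2 rho2).
Hypothesis hreal : really_strongly_contractive ip1 eps1 rho1 ip2 eps2 rho2 phi T.

Local Notation q1 v := (qform ip1 eps1 (rho1 v)).
Local Notation q2 w := (qform ip2 eps2 (rho2 w)).

Lemma cmod_qform_phi_le x eta :
  hnorm ip2 eta = 1 -> cmod (q2 (phi x) eta) <= snorm ip1 eps1 (rho1 x).
Proof.
have [phi_linear phi_star] := hphi.
move=> eta1; have [e e1 ez] := cmod_rotation (q2 (phi x) eta).
have [t [s [Tt Ts ex]]] := hTT (e *: x).
have [xi [xi1 [_ re_le]]] := hreal eta1 (T_add Tt Ts).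
(* writing e x = t + s^*, the real parts of q(e x) and q(t + s) agree *)
have re2 : cre (q2 (phi (t + s)) eta) = cmod (q2 (phi x) eta).
  rewrite (linD phi_linear) -(cre_qform_rep_star hH2 hrho2) -phi_star -(linD phi_linear) -ex.
  by rewrite (linZ phi_linear) (qform_repZ hH2 hrho2) ez.
have re1 : cre (q1 (t + s) xi) = cre (e * q1 x xi).
  by rewrite -(cre_qform_rep_star hH1 hrho1) -ex (qform_repZ hH1 hrho1).
rewrite re2 re1 in re_le; apply: le_trans (ler_norm _) _; apply: le_trans re_le _.
apply: le_trans (cre_le_cmod _) _; rewrite cmodM e1 mul1r.
by apply: (cmod_qform_le_snorm hH1 (rep_bounded hrho1 x)); rewrite xi1.
Qed.

Lemma strongly_contractive_of_real :
  strongly_contractive ip1 eps1 rho1 ip2 eps2 rho2 phi.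
Proof.
move=> x; apply: (snorm_le hH2 (rep_bounded hrho2 (phi x))).
  exact: (snorm_ge0 hH1 (rep_bounded hrho1 x)).
exact: cmod_qform_phi_le.
Qed.

End RealStrongContraction.

Lemma hermitian_contractive_of_strongly (R : realType) (V W : lmodType R[i])
    (mnV : forall n, 'M[V]_n -> R) (starV : V -> V)
    (mnW : forall n, 'M[W]_n -> R) (starW : W -> W) (phi : V -> W)
    (H1 : lmodType R[i]) (ip1 : H1 -> H1 -> R[i]) (eps1 : H1 -> H1) (rho1 : V -> H1 -> H1)
    (H2 : lmodType R[i]) (ip2 : H2 -> H2 -> R[i]) (eps2 : H2 -> H2) (rho2 : W -> H2 -> H2) :
    (forall x, phi (starV x) = starW (phi x)) ->
    graded_hilbert ip1 eps1 -> iso_star_rep mnV starV ip1 eps1 rho1 ->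
    graded_hilbert ip2 eps2 -> iso_star_rep mnW starW ip2 eps2 rho2 ->
    strongly_contractive ip1 eps1 rho1 ip2 eps2 rho2 phi ->
  hermitian_contractive mnV starV mnW phi.
Proof.
move=> phi_star hH1 hrho1 hH2 hrho2 phi_sc x x_sa.
have [bnd1 _ iso1 _] := hrho1; have [bnd2 _ iso2 adj2] := hrho2.
have [xd [xd_adj rho_star]] := adj2 (phi x).
rewrite -phi_star x_sa in rho_star.
rewrite -iso1 -iso2; apply: le_trans (opnorm_le_snorm hH2 (bnd2 _) xd_adj rho_star) _.
exact: le_trans (phi_sc x) (snorm_le_opnorm hH1 (bnd1 x)).
Qed.

Theorem mainTheorem5 (R : realType)
  (V : lmodType R[i]) (mnV : forall n, 'M[V]_n -> R) (starV : V -> V)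
  (hV : super_operator_space mnV starV)
  (W : lmodType R[i]) (mnW : forall n, 'M[W]_n -> R) (starW : W -> W)
  (hW : super_operator_space mnW starW)
  (phi : V -> W) (hphi : star_linear starV starW phi)
  (T : set V) (hT : closed_subspace mnV T)
  (hTT : forall v : V, exists t s : V, [/\ T t, T s & v = t + starV s])
  (H1 : lmodType R[i]) (ip1 : H1 -> H1 -> R[i]) (eps1 : H1 -> H1)
  (hH1 : graded_hilbert ip1 eps1)
  (rho1 : V -> H1 -> H1) (hrho1 : iso_star_rep mnV starV ip1 eps1 rho1)
  (H2 : lmodType R[i]) (ip2 : H2 -> H2 -> R[i]) (eps2 : H2 -> H2)
  (hH2 : graded_hilbert ip2 eps2)
  (rho2 : W -> H2 -> H2) (hrho2 : iso_star_rep mnW starW ip2 eps2 rho2)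
  (hreal : really_strongly_contractive ip1 eps1 rho1 ip2 eps2 rho2 phi T) :
  strongly_contractive ip1 eps1 rho1 ip2 eps2 rho2 phi /\
  hermitian_contractive mnV starV mnW phi.
Proof.
have T_add t s : T t -> T s -> T (t + s).
  by case: hT => _ T_lin _ Tt Ts; have := T_lin 1 t s Tt Ts; rewrite scale1r.
have phi_sc := strongly_contractive_of_real hphi T_add hTT hH1 hrho1 hH2 hrho2 hreal.
split=> //; exact: hermitian_contractive_of_strongly (proj2 hphi) hH1 hrho1 hH2 hrho2 phi_sc.
Qed.
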